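(* Let $\|\cdot\|^*$ be an algebra norm on $\mathbb{R}^n$, let $J:\mathbb{R}\to\mathbb{R}$ be continuous, and let $C,\delta>0$. Then there exists a real polynomial $P$ such that, for every $\phi\in\mathbb{R}^n$ with $\|\phi\|^*\le C$, we have $\|P\circ\phi-J\circ\phi\|_\infty\le\delta$ and $\|P\circ\phi\|^*\le\rho(C,\delta,J)$.
   Context: An algebra norm is a norm $N$ on $\mathbb{R}^n$ (functions on $\{1,\dots,n\}$) with $N(fg)\le N(f)N(g)$ (pointwise product) and $N(\mathbf 1)=1$. $\|f\|_\infty=\max_x|f(x)|$; $P\circ\phi$, $J\circ\phi$ are pointwise compositions. For a real polynomial $P(x)=\sum_ka_kx^k$, $R_P(x)=\sum_k|a_k|x^k$. For continuous $J$ and $C,\delta>0$, $\rho(C,\delta,J)$ is twice the infimum of $R_P(C)$ over all real polynomials $P$ with $|P(x)-J(x)|\le\delta$ for all $x\in[-C,C]$. *)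

From HB Require Import structures.
From mathcomp Require Import all_boot all_order all_algebra.
From mathcomp Require Import all_classical all_reals all_analysis.
Set Implicit Arguments. Unset Strict Implicit. Unset Printing Implicit Defensive.
Import Order.TTheory GRing.Theory Num.Theory.
Import numFieldNormedType.Exports.
Local Open Scope classical_set_scope.
Local Open Scope ring_scope.

(* Functions on {1,...,n} are functions 'I_n -> R (pointwise operations). *)

Definition algebra_norm (R : realType) (n : nat) (N : ('I_n -> R) -> R) : Prop :=
  (forall f, 0 <= N f) /\
  (forall f, N f = 0 -> f = (fun _ => 0)) /\
  (forall (a : R) f, N (fun i => a * f i) = `|a| * N f) /\
  (forall f g, N (fun i => f i + g i) <= N f + N g) /\
  (forall f g, N (fun i => f i * g i) <= N f * N g) /\
  N (fun _ => 1) = 1.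

Definition sup_norm (R : realType) (n : nat) (f : 'I_n -> R) : R :=
  \big[Num.max/0]_(i < n) `|f i|.

Definition RP (R : realType) (P : {poly R}) (x : R) : R :=
  \sum_(k < size P) `|P`_k| * x ^+ k.

Definition rho (R : realType) (C delta : R) (J : R -> R) : R :=
  2 * inf [set r : R | exists P : {poly R},
             (forall x, -C <= x <= C -> `|P.[x] - J x| <= delta) /\ r = RP P C].

From HB Require Import structures.
From mathcomp Require Import all_boot all_order all_algebra.
From mathcomp Require Import all_classical all_reals all_analysis.
From mathcomp Require Import ring lra.
Set Implicit Arguments. Unset Strict Implicit. Unset Printing Implicit Defensive.
Import Order.TTheory GRing.Theory Num.Theory.
Import numFieldNormedType.Exports.
Local Open Scope classical_set_scope.
Local Open Scope ring_scope.

(* An algebra norm dominates every coordinate and satisfies N(phi^k) <= N(phi)^k,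
   so N(P o phi) <= R_P(N phi) <= R_P(C) whenever N phi <= C; moreover
   |phi i| <= N phi <= C, so a polynomial approximating J within delta on [-C, C]
   (Weierstrass, via Bernstein polynomials, whose error is governed by their
   variance (t - t^2)/m) satisfies the sup-norm bound.  It remains to choose such
   a P with R_P(C) <= rho: if the infimum is positive, take R_P(C) below twice it;
   if it is 0, then |J| <= delta on [-C, C] because |P(x)| <= R_P(C), and P = 0
   works. *)

Section Bernstein.
Variable R : comPzRingType.

Definition bernstein (m k : nat) (t : R) : R :=
  'C(m, k)%:R * (t ^+ k * (1 - t) ^+ (m - k)).

Lemma sum_bernstein m t : \sum_(k < m.+1) bernstein m k t = 1.
Proof.
have := exprDn (1 - t) t m; rewrite subrK expr1n => ->.
by apply: eq_bigr => k _; rewrite /bernstein mulr_natl mulrC.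
Qed.

Lemma bernsteinS m k t :
  k.+1%:R * bernstein m.+1 k.+1 t = m.+1%:R * t * bernstein m k t.
Proof.
by rewrite /bernstein subSS mulrA -natrM -mul_bin_diag natrM /= exprS; ring.
Qed.

Lemma sum_bernstein_mom1 m t :
  \sum_(k < m.+1) k%:R * bernstein m k t = m%:R * t.
Proof.
case: m => [|m]; first by rewrite big_ord1 !mul0r.
rewrite big_ord_recl /= mul0r add0r.
under eq_bigr => k _ do rewrite /bump /= add1n bernsteinS.
by rewrite -mulr_sumr sum_bernstein mulr1.
Qed.

Lemma sum_bernstein_mom2 m t :
  \sum_(k < m.+1) k%:R * (k%:R - 1) * bernstein m k t = m%:R * (m%:R - 1) * t ^+ 2.
Proof.
case: m => [|m]; first by rewrite big_ord1 !mul0r.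
rewrite big_ord_recl /= !mul0r add0r.
under eq_bigr => k _.
  rewrite /bump /= add1n -natr1 addrK.
  have -> : (k%:R + 1) * k%:R * bernstein m.+1 k.+1 t =
            k%:R * (k.+1%:R * bernstein m.+1 k.+1 t) by rewrite -natr1; ring.
  rewrite bernsteinS.
  over.
rewrite (eq_bigr (fun k : 'I_m.+1 => m.+1%:R * t * (k%:R * bernstein m k t))).
  by rewrite -mulr_sumr sum_bernstein_mom1 -natr1 addrK; ring.
by move=> k _; ring.
Qed.

End Bernstein.

Lemma bernstein_ge0 (R : numDomainType) m k (t : R) :
  0 <= t <= 1 -> 0 <= bernstein m k t.
Proof.
move=> /andP[t0 t1]; rewrite /bernstein mulr_ge0 // mulr_ge0 // exprn_ge0 //.
by rewrite subr_ge0.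
Qed.

Lemma sum_bernstein_var (R : numFieldType) m (t : R) : (0 < m)%N ->
  \sum_(k < m.+1) (k%:R / m%:R - t) ^+ 2 * bernstein m k t = (t - t ^+ 2) / m%:R.
Proof.
move=> m_gt0; have m_neq0 : (m%:R : R) != 0 by rewrite pnatr_eq0 -lt0n.
rewrite (eq_bigr (fun k : 'I_m.+1 =>
    (m%:R^-1) ^+ 2 * (k%:R * (k%:R - 1) * bernstein m k t)
  + ((m%:R^-1) ^+ 2 - 2 * t * m%:R^-1) * (k%:R * bernstein m k t)
  + t ^+ 2 * bernstein m k t)); last by move=> k _; ring.
rewrite !big_split /= -!mulr_sumr sum_bernstein_mom2 sum_bernstein_mom1 sum_bernstein.
by field.
Qed.

Lemma compact_unif_cont (R : realType) (A : set R) (g : R -> R) (e : R) :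
  compact A -> continuous g -> 0 < e ->
  exists2 eta : R, 0 < eta &
    forall s t, A t -> `|s - t| < eta -> `|g s - g t| < e.
Proof.
move=> cA gc e_gt0.
move: cA; rewrite compact_near_coveringP => /(_ R (0^'+)
  (fun eta t => forall s, `|s - t| < eta -> `|g s - g t| < e) _) [x _|].
- have e2_gt0 : 0 < e / 2 by lra.
  have /cvgrPdist_lt /(_ _ e2_gt0) /nbhs_ballP [d /= d_gt0 gd] := gc x.
  have d2_gt0 : 0 < d / 2 by lra.
  near=> y i => s /= sy.
  have xy : `|x - y| < d / 2 by near: y; apply/nbhs_ballP; exists (d / 2).
  have i_lt : i < d / 2 by near: i; exact: nbhs_right_lt.
  have gy : `|g x - g y| < e / 2 by apply: gd; rewrite /ball /=; lra.
  have gs : `|g x - g s| < e / 2.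
    apply: gd; rewrite /ball /=.
    by have := ler_distD y x s; rewrite (distrC y s); lra.
  by have := ler_distD (g x) (g s) (g y); rewrite (distrC (g s) (g x)); lra.
- move=> r /= r_gt0 Ar; exists (r / 2); first lra.
  move=> s t At; apply: (Ar (r / 2)) => //=; last lra.
  by rewrite /ball /= sub0r normrN gtr0_norm; lra.
Unshelve. all: by end_near.
Qed.

Lemma continuous_quadratic_modulus01 (R : realType) (g : R -> R) (e : R) :
  continuous g -> 0 < e ->
  exists2 K : R, 0 <= K & forall s t, 0 <= s <= 1 -> 0 <= t <= 1 ->
    `|g s - g t| <= e + K * (s - t) ^+ 2.
Proof.
move=> gc e_gt0.
have [c _ gc_max] : exists2 c, c \in `[(0:R), 1] &
    forall t, t \in `[(0:R), 1] -> `|g t| <= `|g c|.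
  apply: EVT_max => //; apply: continuous_subspaceT => x.
  exact: continuous_comp (gc x) (@norm_continuous _ R _).
have [eta eta_gt0 g_eta] := compact_unif_cont (@segment_compact R 0 1) gc e_gt0.
have eta2_gt0 : 0 < eta ^+ 2 by rewrite exprn_gt0.
(* beyond distance eta the oscillation 2 |g c| is paid by the quadratic term *)
exists (2 * `|g c| / eta ^+ 2) => [|s t s01 t01]; first by rewrite divr_ge0 ?mulr_ge0 // ltW.
have [near|far] := ltP `|s - t| eta.
  have := g_eta s t (t01 : _ \in `[_, _]) near.
  have : 0 <= 2 * `|g c| / eta ^+ 2 * (s - t) ^+ 2.
    by rewrite mulr_ge0 ?sqr_ge0 // divr_ge0 ?mulr_ge0 // ltW.
  lra.
have far2 : eta ^+ 2 <= (s - t) ^+ 2.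
  by rewrite -[(s - t) ^+ 2]real_normK ?num_real // lerXn2r // nnegrE ltW.
have : 2 * `|g c| <= 2 * `|g c| / eta ^+ 2 * (s - t) ^+ 2.
  by rewrite mulrAC ler_pdivlMr // ler_wpM2l ?mulr_ge0.
have := ler_normB (g s) (g t).
have gt_le := gc_max t; have gs_le := gc_max s.
rewrite !in_itv /= in gt_le gs_le.
by have := gt_le t01; have := gs_le s01; lra.
Qed.

Definition bernstein_poly (R : fieldType) (g : R -> R) (m : nat) : {poly R} :=
  \sum_(k < m.+1) (g (k%:R / m%:R) * 'C(m, k)%:R) *: ('X^k * (1 - 'X) ^+ (m - k)).

Lemma horner_bernstein_poly (R : fieldType) (g : R -> R) m t :
  (bernstein_poly g m).[t] = \sum_(k < m.+1) g (k%:R / m%:R) * bernstein m k t.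
Proof.
rewrite horner_sum; apply: eq_bigr => k _.
by rewrite !hornerE /bernstein; ring.
Qed.

Lemma bernstein_poly_error (R : realFieldType) (g : R -> R) (e K : R) m t :
  (0 < m)%N -> 0 <= K ->
  (forall s t, 0 <= s <= 1 -> 0 <= t <= 1 -> `|g s - g t| <= e + K * (s - t) ^+ 2) ->
  0 <= t <= 1 -> `|(bernstein_poly g m).[t] - g t| <= e + K / m%:R.
Proof.
move=> m_gt0 K_ge0 g_mod t01.
have m_gt0R : (0 : R) < m%:R by rewrite ltr0n.
have node01 (k : 'I_m.+1) : 0 <= (k%:R / m%:R : R) <= 1.
  by apply/andP; split; [exact: divr_ge0 | rewrite ler_pdivrMr // mul1r ler_nat -ltnS].
rewrite horner_bernstein_poly.
have -> : g t = \sum_(k < m.+1) g t * bernstein m k t.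
  by rewrite -mulr_sumr sum_bernstein mulr1.
rewrite -sumrB.
apply: le_trans (ler_norm_sum _ _ _) _.
apply: le_trans (_ : \sum_(k < m.+1)
    (e * bernstein m k t + K * ((k%:R / m%:R - t) ^+ 2 * bernstein m k t)) <= _).
  apply: ler_sum => k _.
  rewrite -mulrBl normrM (ger0_norm (bernstein_ge0 _ _ t01)) [K * _]mulrA -mulrDl.
  by rewrite ler_wpM2r ?bernstein_ge0 //; exact: g_mod.
rewrite big_split /= -!mulr_sumr sum_bernstein sum_bernstein_var // mulr1 lerD2l.
rewrite mulrA ler_pM2r ?invr_gt0 //.
by move: t01 => /andP[t0 t1]; nra.
Qed.

Lemma weierstrass01 (R : realType) (g : R -> R) (e : R) : continuous g -> 0 < e ->
  exists Q : {poly R}, forall t, 0 <= t <= 1 -> `|Q.[t] - g t| <= e.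
Proof.
move=> gc e_gt0; have e2_gt0 : 0 < e / 2 by lra.
have [K K_ge0 g_mod] := continuous_quadratic_modulus01 gc e2_gt0.
pose m := (Num.bound (K / (e / 2))).+1.
have Km_le : K / m%:R <= e / 2.
  have := archi_boundP (divr_ge0 K_ge0 (ltW e2_gt0)).
  rewrite ltr_pdivrMr // ler_pdivrMr ?ltr0n // => /ltW /le_trans; apply.
  by rewrite mulrC ler_wpM2l ?ler_nat ?ltW.
exists (bernstein_poly g m) => t t01.
by have := bernstein_poly_error (m := m) (ltn0Sn _) K_ge0 g_mod t01; lra.
Qed.

Lemma weierstrass (R : realType) (J : R -> R) (a b e : R) :
  a < b -> continuous J -> 0 < e ->
  exists P : {poly R}, forall x, a <= x <= b -> `|P.[x] - J x| <= e.
Proof.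
move=> ab Jc e_gt0; have ba_gt0 : 0 < b - a by rewrite subr_gt0.
pose g t := J (a + (b - a) * t).
have gc : continuous g.
  move=> t; apply: continuous_comp; last exact: Jc.
  apply: continuousD; first exact: cst_continuous.
  by apply: continuousM; [exact: cst_continuous | exact: cvg_id].
have [Q gQ] := weierstrass01 gc e_gt0.
exists (Q \Po ((b - a)^-1 *: ('X - a%:P))) => x /andP[ax xb].
have -> : J x = g ((b - a)^-1 * (x - a)).
  by rewrite /g mulrA mulfV ?gt_eqF // mul1r addrC subrK.
rewrite horner_comp !hornerE; apply: gQ.
rewrite mulr_ge0 ?invr_ge0 ?subr_ge0 ?(ltW ab) //=.
by rewrite mulrC ler_pdivrMr // mul1r lerD2r.
Qed.

Lemma RP_ge0 (R : realType) (P : {poly R}) x : 0 <= x -> 0 <= RP P x.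
Proof. by move=> x_ge0; apply: sumr_ge0 => k _; rewrite mulr_ge0 ?exprn_ge0. Qed.

Lemma RP_le (R : realType) (P : {poly R}) x y : 0 <= x -> x <= y -> RP P x <= RP P y.
Proof.
move=> x_ge0 xy; apply: ler_sum => k _.
by rewrite ler_wpM2l // lerXn2r ?nnegrE ?(le_trans x_ge0 xy).
Qed.

Lemma RP0 (R : realType) x : RP (0 : {poly R}) x = 0.
Proof. by rewrite /RP size_poly0 big_ord0. Qed.

Lemma normr_horner_le_RP (R : realType) (P : {poly R}) x c :
  `|x| <= c -> `|P.[x]| <= RP P c.
Proof.
move=> xc; rewrite horner_coef (le_trans (ler_norm_sum _ _ _)) //.
apply: ler_sum => k _; rewrite normrM normrX ler_wpM2l //.
by rewrite lerXn2r ?nnegrE ?(le_trans _ xc).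
Qed.

Section AlgebraNorm.
Variables (R : realType) (n : nat) (N : ('I_n -> R) -> R).
Hypothesis HN : algebra_norm N.

Lemma anorm_ge0 f : 0 <= N f.
Proof. by case: HN => ge0 _; exact: ge0. Qed.

Lemma anorm_eq0 f : N f = 0 -> f = (fun _ => 0).
Proof. by case: HN => _ [eq0 _]; exact: eq0. Qed.

Lemma anormZ (a : R) f : N (fun i => a * f i) = `|a| * N f.
Proof. by case: HN => _ [_ [homZ _]]; exact: homZ. Qed.

Lemma anormD f g : N (fun i => f i + g i) <= N f + N g.
Proof. by case: HN => _ [_ [_ [subD _]]]; exact: subD. Qed.

Lemma anormM f g : N (fun i => f i * g i) <= N f * N g.
Proof. by case: HN => _ [_ [_ [_ [subM _]]]]; exact: subM. Qed.

Lemma anorm1 : N (fun _ => 1) = 1.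
Proof. by case: HN => _ [_ [_ [_ [_ one]]]]. Qed.

Lemma anorm0 : N (fun _ => 0) = 0.
Proof.
have -> : (fun _ : 'I_n => 0 : R) = (fun i => 0 * (fun _ => 0 : R) i).
  by apply: funext => i; rewrite mul0r.
by rewrite anormZ normr0 mul0r.
Qed.

Lemma anorm_sum (I : Type) (r : seq I) (F : I -> 'I_n -> R) :
  N (fun i => \sum_(k <- r) F k i) <= \sum_(k <- r) N (F k).
Proof.
elim: r => [|a r IHr].
  by under [X in N X]funext => i do rewrite big_nil; rewrite big_nil anorm0.
under [X in N X]funext => i do rewrite big_cons.
by rewrite big_cons (le_trans (anormD _ _)) // lerD2l.
Qed.

Lemma anormX phi k : N (fun i => phi i ^+ k) <= N phi ^+ k.
Proof.
elim: k => [|k IHk].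
  by under [X in N X]funext => i do rewrite expr0; rewrite anorm1 expr0.
under [X in N X]funext => i do rewrite exprS.
by rewrite exprS (le_trans (anormM _ _)) // ler_wpM2l ?anorm_ge0.
Qed.

(* phi * e_i = phi i * e_i for the indicator e_i of i, and N e_i > 0 *)
Lemma normr_le_anorm phi i : `|phi i| <= N phi.
Proof.
pose e j : R := (j == i)%:R.
have e_gt0 : 0 < N e.
  rewrite lt0r anorm_ge0 andbT; apply/eqP => /anorm_eq0 /(congr1 (fun f => f i)).
  by rewrite /e eqxx => /eqP; rewrite oner_eq0.
have := anormM e phi.
have -> : (fun j => e j * phi j) = (fun j => phi i * e j).
  by apply: funext => j; rewrite /e; case: eqP => [->|_]; rewrite ?mulr1 ?mulr0 ?mul1r ?mul0r.
by rewrite anormZ mulrC ler_pM2l.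
Qed.

Lemma anorm_horner (P : {poly R}) phi : N (fun i => P.[phi i]) <= RP P (N phi).
Proof.
under [X in N X]funext => i do rewrite horner_coef.
apply: le_trans (anorm_sum _ (fun k : 'I_(size P) => fun i => P`_k * phi i ^+ k)) _.
by apply: ler_sum => k _; rewrite anormZ ler_wpM2l ?anormX.
Qed.

End AlgebraNorm.

Lemma approx_poly_RP_le_rho (R : realType) (J : R -> R) (C delta : R) :
  continuous J -> 0 < C -> 0 < delta ->
  exists P : {poly R}, (forall x, -C <= x <= C -> `|P.[x] - J x| <= delta) /\
    RP P C <= rho C delta J.
Proof.
move=> Jc C_gt0 delta_gt0.
set S := [set r : R | exists P : {poly R},
  (forall x, -C <= x <= C -> `|P.[x] - J x| <= delta) /\ r = RP P C].
have [P0 JP0] := weierstrass (gtrN C_gt0) Jc delta_gt0.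
have S_ge0 : lbound S 0 by move=> r [P [_ ->]]; rewrite RP_ge0 ?ltW.
have S_inf : has_inf S by split; [exists (RP P0 C), P0 | exists 0].
have inf_ge0 : 0 <= inf S := lb_le_inf S_inf.1 S_ge0.
have [inf_gt0|inf_le0] := ltP 0 (inf S).
  have [_ [P [JP ->]] RP_lt] := inf_adherent inf_gt0 S_inf.
  by exists P; split => //; rewrite /rho -/S; lra.
exists 0; split; last by rewrite RP0 /rho mulr_ge0.
move=> x Cx; rewrite horner0 sub0r normrN; apply/ler_addgt0Pr => eps eps_gt0.
have [_ [P [JP ->]] RP_lt] := inf_adherent eps_gt0 S_inf.
have Px : `|P.[x]| <= RP P C by rewrite normr_horner_le_RP // ler_norml.
have := JP x Cx; have := ler_distD P.[x] (J x) 0; rewrite !subr0 distrC.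
lra.
Qed.

Theorem lemma4p3 (R : realType) (n : nat) (N : ('I_n -> R) -> R)
    (J : R -> R) (C delta : R) :
  algebra_norm N -> continuous J -> 0 < C -> 0 < delta ->
  exists P : {poly R}, forall phi : 'I_n -> R, N phi <= C ->
    sup_norm (fun i => P.[phi i] - J (phi i)) <= delta /\
    N (fun i => P.[phi i]) <= rho C delta J.
Proof.
move=> HN Jc C_gt0 delta_gt0.
have [P [JP RP_le_rho]] := approx_poly_RP_le_rho Jc C_gt0 delta_gt0.
exists P => phi phiC; split.
  apply: bigmax_le => [|i _]; first exact: ltW.
  by apply: JP; rewrite -ler_norml (le_trans (normr_le_anorm HN phi i)).
apply: le_trans (anorm_horner HN P phi) _; apply: le_trans RP_le_rho.
by rewrite RP_le ?anorm_ge0.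
Qed.
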